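(* Let $(\chi_1,u_1)$ and $(\chi_2,u_2)$ be rooted chirotopes (not necessarily realizable). Then their join $(\chi_3,u_3)=(\chi_1,u_1)\vee(\chi_2,u_2)$ is a rooted chirotope; that is, $\chi_3$ is a chirotope and $u_3$ is an extreme element of $\chi_3$.
   Context: For a finite set $E$, $(E)_3$ is the set of ordered triples of distinct elements of $E$. A sign function on $E$ is a map $\chi:(E)_3\to\{-1,1\}$ with $\chi(x,y,z)=\chi(y,z,x)=\chi(z,x,y)=-\chi(z,y,x)=-\chi(y,x,z)=-\chi(x,z,y)$. A chirotope on $E$ is a sign function that moreover satisfies: (interiority) for distinct $t,x,y,z$, if $\chi(t,y,z)=\chi(x,t,z)=\chi(x,y,t)=1$ then $\chi(x,y,z)=1$; (transitivity) for distinct $s,t,x,y,z$, if $\chi(t,s,x)=\chi(t,s,y)=\chi(t,s,z)=\chi(x,y,t)=\chi(y,z,t)=1$ then $\chi(x,z,t)=1$. An element $x$ is extreme if there is $y\ne x$ such that $\chi(x,y,z)$ takes the same value for all $z\in E\setminus\{x,y\}$. A rooted chirotope is a pair $(\chi,u)$ with $\chi$ a chirotope on $X\cup\{u\}$ and $u\notin X$ an extreme element. For a rooted chirotope, $u^+$ (resp. $u^-$) is the element $y$ with $\chi(u,y,z)=1$ (resp. $\chi(y,u,z)=1$) for all $z\notin\{u,y\}$ (the successor/predecessor of $u$ in counterclockwise order on the convex hull). Join: given rooted chirotopes $(\chi_1,u_1)$ on $X_1\cup\{u_1\}$ and $(\chi_2,u_2)$ on $X_2\cup\{u_2\}$, let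 $X_3$ be the disjoint union of $X_1$ and $X_2$ in which $u_1^-$ and $u_2^+$ are identified into one element $x_0$ (so $X_1,X_2\subseteq X_3$ with $X_1\cap X_2=\{x_0\}$), and let $u_3$ be a new element. The join $(\chi_3,u_3)$ has $\chi_3$ the sign function on $X_3\cup\{u_3\}$ determined (using symmetry) by: for $x,y,z\in X_3$, $\chi_3(x,y,z)=\chi_1(x,y,z)$ if $x,y,z\in X_1$; $=\chi_2(x,y,z)$ if $x,y,z\in X_2$; $=\chi_1(x,y,u_1)$ if $x,y\in X_1$ and $z\in X_2\setminus\{u_2^+\}$; $=\chi_2(u_2,y,z)$ if $x\in X_1\setminus\{u_1^-\}$ and $y,z\in X_2$; and for $x,y\in X_3$, $\chi_3(x,y,u_3)=\chi_1(x,y,u_1)$ if $x,y\in X_1$; $=\chi_2(x,y,u_2)$ if $x,y\in X_2$; $=1$ if $x\in X_1\setminus\{u_1^-\}$ and $y\in X_2\setminus\{u_2^+\}$. (These rules are consistent and determine $\chi_3$ on all triples.) *)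

From HB Require Import structures.
From mathcomp Require Import all_boot all_order all_algebra.
Set Implicit Arguments. Unset Strict Implicit. Unset Printing Implicit Defensive.
Import Order.TTheory GRing.Theory Num.Theory.
Local Open Scope ring_scope.

(* A sign function / chirotope on a finite set E is modelled as a map
   chi : E -> E -> E -> int on a finType E; only its values on triples of
   pairwise distinct elements matter. *)

Definition distinct3 (T : eqType) (x y z : T) := uniq [:: x; y; z].

Definition sign_function (T : finType) (chi : T -> T -> T -> int) : Prop :=
  forall x y z, distinct3 x y z ->
    (chi x y z = 1 \/ chi x y z = -1) /\
    chi x y z = chi y z x /\ chi x y z = chi z x y /\
    chi x y z = - chi z y x /\ chi x y z = - chi y x z /\
    chi x y z = - chi x z y.

Definition interiority (T : finType) (chi : T -> T -> T -> int) : Prop :=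
  forall t x y z, uniq [:: t; x; y; z] ->
    chi t y z = 1 -> chi x t z = 1 -> chi x y t = 1 -> chi x y z = 1.

Definition transitivity (T : finType) (chi : T -> T -> T -> int) : Prop :=
  forall s t x y z, uniq [:: s; t; x; y; z] ->
    chi t s x = 1 -> chi t s y = 1 -> chi t s z = 1 ->
    chi x y t = 1 -> chi y z t = 1 -> chi x z t = 1.

Definition chirotope (T : finType) (chi : T -> T -> T -> int) : Prop :=
  [/\ sign_function chi, interiority chi & transitivity chi].

Definition extreme (T : finType) (chi : T -> T -> T -> int) (x : T) : Prop :=
  exists y, y != x /\
    exists s : int, forall z, z != x -> z != y -> chi x y z = s.

Definition rooted_chirotope (T : finType) (chi : T -> T -> T -> int) (u : T) :=
  chirotope chi /\ extreme chi u.

Definition is_succ (T : finType) (chi : T -> T -> T -> int) (u y : T) :=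
  y != u /\ forall z, z != u -> z != y -> chi u y z = 1.
Definition is_pred (T : finType) (chi : T -> T -> T -> int) (u y : T) :=
  y != u /\ forall z, z != u -> z != y -> chi y u z = 1.

Section Join.
Variables (T1 T2 : finType) (chi1 : T1 -> T1 -> T1 -> int) (u1 u1m : T1)
          (chi2 : T2 -> T2 -> T2 -> int) (u2 u2p : T2).

(* X1 = T1 \ {u1};  X2 \ {u2^+} = T2 \ {u2, u2p}.
   X3 = X1 ⊔ (X2 \ {u2^+}) (so u2^+ is identified with u1^- = x0 ∈ X1),
   and the join ground set is X3 ∪ {u3} with u3 = None. *)
Definition join_type : finType :=
  option ({x : T1 | x != u1} + {y : T2 | (y != u2) && (y != u2p)})%type.

Definition to1 (x : join_type) : option T1 :=
  match x with Some (inl a) => Some (val a) | _ => None end.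
Definition to2 (x : join_type) : option T2 :=
  match x with
  | Some (inl a) => if val a == u1m then Some u2p else None
  | Some (inr b) => Some (val b)
  | None => None
  end.
Definition pureA (x : join_type) : bool :=
  match x with Some (inl a) => val a != u1m | _ => false end.
Definition pureB (x : join_type) : bool :=
  match x with Some (inr _) => true | _ => false end.

Definition join_rule (x y z : join_type) : option int :=
  match x, y with
  | None, _ => None
  | _, None => None
  | _, _ =>
    match z with
    | None =>
      match to1 x, to1 y with
      | Some a, Some b => Some (chi1 a b u1)
      | _, _ =>
        match to2 x, to2 y with
        | Some a, Some b => Some (chi2 a b u2)
        | _, _ => if pureA x && pureB y then Some 1 else None
        end
      end
    | Some _ =>
      match to1 x, to1 y, to1 z with
      | Some a, Some b, Some c => Some (chi1 a b c)
      | _, _, _ =>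
        match to2 x, to2 y, to2 z with
        | Some a, Some b, Some c => Some (chi2 a b c)
        | _, _, _ =>
          match to1 x, to1 y with
          | Some a, Some b => if pureB z then Some (chi1 a b u1) else None
          | _, _ =>
            match to2 y, to2 z with
            | Some b, Some c => if pureA x then Some (chi2 u2 b c) else None
            | _, _ => None
            end
          end
        end
      end
    end
  end.

(* chi3 is determined from the rules using the symmetries of a sign function *)
Definition join_chi (x y z : join_type) : int :=
  if join_rule x y z is Some s then s else
  if join_rule y z x is Some s then s else
  if join_rule z x y is Some s then s else
  if join_rule z y x is Some s then - s else
  if join_rule y x z is Some s then - s else
  if join_rule x z y is Some s then - s else 1.

End Join.

Arguments join_chi {T1 T2} chi1 u1 u1m chi2 u2 u2p x y z.
Arguments join_rule {T1 T2} chi1 u1 u1m chi2 u2 u2p x y z.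

From mathcomp Require Import all_boot all_order all_algebra.
From mathcomp Require Import zify.
Set Implicit Arguments. Unset Strict Implicit. Unset Printing Implicit Defensive.
Import GRing.Theory.

(* For a rooted chirotope (chi, u), put u first and order the other elements by
   a < b iff chi(a, b, u) = 1, the counterclockwise order around u.  When u has a
   predecessor or a successor this is a strict total order, and chi is a signotope
   for it: along every increasing quadruple p < q < r < s the signs of qrs, prs, pqs,
   pqr change at most once.  Conversely, a sign function that is a signotope for a
   total order is a chirotope.  Order the join by u3, then X1 (which ends with
   x0 = u1^-), then X2 \ {u2^+}.  On triples inside the left or the right part chi3
   is chi1 or chi2, and on increasing mixed triples it is +1; hence chi3 is a
   signotope, so a chirotope, and the last element y of the order has
   chi3(u3, y, z) = -1 for all z, so u3 is extreme.  The facts about four or five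
   points are checked by enumerating all sign functions on them. *)

Ltac solve_distinct :=
  rewrite /distinct3 /= ?inE ?negb_or ?andbT;
  repeat (apply/andP; split); first [done | by rewrite eq_sym].

Ltac split_conjunctions :=
  repeat match goal with H : is_true (_ && _) |- _ => case/andP: H => ? ? end.

Lemma distinct3E (T : eqType) (x y z : T) :
  distinct3 x y z = [&& x != y, x != z & y != z].
Proof. by rewrite /distinct3 /= !inE !negb_or andbT andbA. Qed.

Section SignFunction.
Variables (T : finType) (chi : T -> T -> T -> int).
Hypothesis chiS : sign_function chi.

Lemma sign_pm1 x y z : distinct3 x y z -> chi x y z = 1%R \/ chi x y z = (-1)%R.
Proof. by case/chiS. Qed.

Lemma sign_rot x y z : distinct3 x y z -> chi x y z = chi y z x.
Proof. by case/chiS => _ []. Qed.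

Lemma sign_swap x y z : distinct3 x y z -> chi x y z = (- chi y x z)%R.
Proof. by case/chiS => _ [] _ [] _ [] _ []. Qed.

Lemma sign_swap23 x y z : distinct3 x y z -> chi x y z = (- chi x z y)%R.
Proof. by case/chiS => _ [] _ [] _ [] _ []. Qed.

Lemma sign_eq1_swap x y z : distinct3 x y z -> (chi x y z == 1%R) = (chi y x z != 1%R).
Proof.
move=> xyz; have yxz : distinct3 y x z.
  by move: xyz; rewrite distinct3E => /and3P [*]; solve_distinct.
by rewrite sign_swap //; case: (sign_pm1 yxz) => ->.
Qed.

Lemma sign_eq1_swap23 x y z : distinct3 x y z -> (chi x y z == 1%R) = (chi x z y != 1%R).
Proof.
move=> xyz; have xzy : distinct3 x z y.
  by move: xyz; rewrite distinct3E => /and3P [*]; solve_distinct.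
by rewrite sign_swap23 //; case: (sign_pm1 xzy) => ->.
Qed.

Lemma sign_eq1E x y z : distinct3 x y z ->
  (if chi x y z == 1%R then 1%R else (-1)%R) = chi x y z.
Proof. by case/sign_pm1 => ->. Qed.

End SignFunction.

Definition one_sign_change (a b c d : bool) := ((a != b) + (b != c) + (c != d) <= 1)%N.

Definition signotope (T : finType) (lt : rel T) (chi : T -> T -> T -> int) :=
  forall p q r s, lt p q -> lt q r -> lt r s ->
    one_sign_change (chi q r s == 1%R) (chi p r s == 1%R) (chi p q s == 1%R) (chi p q r == 1%R).

(** * Exhaustive checks on four and five points *)

(* A sign function on {0, ..., n-1} is stored as one bit per increasing triple, in the
   order of [increasing_triples n]; [orient] recovers the other triples by alternation.
   The checks use [if] rather than [==>] to stay lazy under vm_compute. *)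
Definition increasing_triples n : seq (nat * nat * nat) :=
  flatten [seq [seq (a, b, c) | b <- iota a.+1 (n - a.+1), c <- iota b.+1 (n - b.+1)]
          | a <- iota 0 n].

Definition bit_at (bs : seq bool) n a b c :=
  nth false bs (index (a, b, c) (increasing_triples n)).

Definition orient (bs : seq bool) n i j l : bool :=
  let s := bit_at bs n in
  if i < j then
    if j < l then s i j l else if i < l then ~~ s i l j else s l i j
  else if i < l then ~~ s j i l else if j < l then s j l i else ~~ s l j i.

Definition interiorityb (o : nat -> nat -> nat -> bool) n :=
  all (fun t => all (fun x => all (fun y => all (fun z =>
    if uniq [:: t; x; y; z] then o t y z ==> o x t z ==> o x y t ==> o x y z else true)
  (iota 0 n)) (iota 0 n)) (iota 0 n)) (iota 0 n).

Definition transitivityb (o : nat -> nat -> nat -> bool) n :=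
  all (fun s => all (fun t => all (fun x => all (fun y => all (fun z =>
    if uniq [:: s; t; x; y; z] then
      o t s x ==> o t s y ==> o t s z ==> o x y t ==> o y z t ==> o x z t
    else true)
  (iota 0 n)) (iota 0 n)) (iota 0 n)) (iota 0 n)) (iota 0 n).

Definition monotoneb (o : nat -> nat -> nat -> bool) p q r s :=
  one_sign_change (o q r s) (o p r s) (o p q s) (o p q r).

Fixpoint bitseqs k : seq (seq bool) :=
  if k is k'.+1 then [seq b :: bs | b <- [:: true; false], bs <- bitseqs k'] else [:: [::]].

Definition all_configurations n (P : (nat -> nat -> nat -> bool) -> bool) :=
  all (fun bs => P (orient bs n)) (bitseqs (size (increasing_triples n))).

Lemma signotope4_interiority_check :
  all_configurations 4 (fun o => if monotoneb o 0 1 2 3 then interiorityb o 4 else true).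
Proof. by vm_compute. Qed.

Lemma signotope5_transitivity_check :
  all_configurations 5 (fun o =>
    if [&& monotoneb o 0 1 2 3, monotoneb o 0 1 2 4, monotoneb o 0 1 3 4,
           monotoneb o 0 2 3 4 & monotoneb o 1 2 3 4]
    then transitivityb o 5 else true).
Proof. by vm_compute. Qed.

(* The first check below is transitivity with s and t exchanged in its first three
   hypotheses; the angular order needs it when u has a predecessor. *)
Definition all_chirotope_configurations n (H C : (nat -> nat -> nat -> bool) -> bool) :=
  all_configurations n (fun o =>
    if H o then if interiorityb o n && transitivityb o n then C o else true else true).

Lemma mirrored_transitivity_check :
  all_chirotope_configurations 5 (fun o => [&& o 1 0 2, o 1 0 3, o 1 0 4, o 2 3 0 & o 3 4 0])
                                 (fun o => o 2 4 0).
Proof. by vm_compute. Qed.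

Lemma angular_signotope_check :
  all_chirotope_configurations 5
    (fun o => [&& o 0 1 2, o 0 1 3, o 0 1 4, o 0 2 3, o 0 2 4 & o 0 3 4])
    (fun o => monotoneb o 1 2 3 4).
Proof. by vm_compute. Qed.

Lemma mem_increasing_triples n a b c :
  a < b -> b < c -> c < n -> (a, b, c) \in increasing_triples n.
Proof.
move=> ab bc cn; apply/flatten_mapP; exists a; first by rewrite mem_iota; lia.
by apply/allpairsPdep; exists b, c; rewrite !mem_iota; split => //; lia.
Qed.

Lemma all_iotaP n (P : pred nat) : reflect (forall i, i < n -> P i) (all P (iota 0 n)).
Proof.
apply: (iffP allP) => H i; last by rewrite mem_iota => /andP[_ /H].
by move=> ilt; apply: H; rewrite mem_iota.
Qed.

Lemma bitseqs_size (bs : seq bool) : bs \in bitseqs (size bs).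
Proof. by elim: bs => [|b bs IH] //; apply/allpairsP; exists (b, bs); case: b. Qed.

Definition encode (T : finType) (chi : T -> T -> T -> int) (x0 : T) (w : seq T) :=
  [seq chi (nth x0 w t.1.1) (nth x0 w t.1.2) (nth x0 w t.2) == 1%R
  | t <- increasing_triples (size w)].

Section Encoding.
Variables (T : finType) (chi : T -> T -> T -> int) (x0 : T) (n : nat) (w : seq T).
Hypotheses (chiS : sign_function chi) (w_uniq : uniq w) (w_size : size w = n).
Local Notation W := (nth x0 w).
Local Notation o := (orient (encode chi x0 w) n).

Lemma check_configuration P : all_configurations n P -> P o.
Proof.
move/allP; apply; rewrite -w_size.
by rewrite -(size_map (fun t => chi (W t.1.1) (W t.1.2) (W t.2) == 1%R)) bitseqs_size.
Qed.

Lemma uniq_map_nth (s : seq nat) : all (fun i => i < n) s -> uniq (map W s) = uniq s.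
Proof.
move=> /allP sn; apply: map_inj_in_uniq => i j /sn ilt /sn jlt /eqP.
by rewrite nth_uniq ?w_size // => /eqP.
Qed.

Lemma uniq_map_index (s : seq T) : {subset s <= w} -> uniq (map (index^~ w) s) = uniq s.
Proof. by move=> sw; apply: map_inj_in_uniq => a b /sw aw /sw bw; apply: index_inj. Qed.

Lemma bit_at_encode a b c : a < b -> b < c -> c < n ->
  bit_at (encode chi x0 w) n a b c = (chi (W a) (W b) (W c) == 1%R).
Proof.
move=> ab bc cn; rewrite /bit_at /encode w_size.
have abc := mem_increasing_triples ab bc cn.
by rewrite (nth_map (0, 0, 0)) ?index_mem // nth_index.
Qed.

Lemma orient_encode i j l : i < n -> j < n -> l < n -> distinct3 i j l ->
  o i j l = (chi (W i) (W j) (W l) == 1%R).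
Proof.
move=> ilt jlt llt ijl.
have d : distinct3 (W i) (W j) (W l).
  by rewrite /distinct3 (uniq_map_nth (s := [:: i; j; l])) //= ilt jlt llt.
have := d; rewrite distinct3E => /and3P [? ? ?].
move: ijl; rewrite distinct3E => /and3P [ij il jl]; rewrite /orient.
case: (ltngtP i j) ij => // ij _; case: (ltngtP j l) jl => // jl _;
  case: (ltngtP i l) il => // il _; try lia.
all: rewrite bit_at_encode //.
- by rewrite (sign_eq1_swap23 chiS d).
- by rewrite (sign_rot chiS d) (sign_rot chiS (x := W j)) //; solve_distinct.
- by rewrite (sign_eq1_swap chiS d).
- by rewrite (sign_rot chiS d).
- by rewrite (sign_rot chiS d) (sign_eq1_swap chiS (x := W j)) //; solve_distinct.
Qed.

Lemma orient_encode_index p q r : p \in w -> q \in w -> r \in w -> distinct3 p q r ->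
  o (index p w) (index q w) (index r w) = (chi p q r == 1%R).
Proof.
move=> pw qw rw pqr; rewrite orient_encode ?nth_index // -?w_size ?index_mem //.
rewrite /distinct3 -[[:: index p w; _; _]]/(map (index^~ w) [:: p; q; r]) uniq_map_index //.
by move=> a; rewrite !inE => /or3P [] /eqP ->.
Qed.

Lemma interiorityb_encode : interiority chi -> interiorityb o n.
Proof.
move=> chiI; apply/all_iotaP => t tn; apply/all_iotaP => x xn.
apply/all_iotaP => y yn; apply/all_iotaP => z zn.
case: ifP => // txyz; move: (txyz); rewrite /= !inE !negb_or => ?; split_conjunctions.
rewrite !orient_encode //; try solve_distinct.
apply/implyP => /eqP h1; apply/implyP => /eqP h2; apply/implyP => /eqP h3; apply/eqP.
by apply: (chiI (W t)); rewrite // (uniq_map_nth (s := [:: t; x; y; z])) //= tn xn yn zn.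
Qed.

Lemma transitivityb_encode : transitivity chi -> transitivityb o n.
Proof.
move=> chiT; apply/all_iotaP => s sn; apply/all_iotaP => t tn; apply/all_iotaP => x xn.
apply/all_iotaP => y yn; apply/all_iotaP => z zn.
case: ifP => // stxyz; move: (stxyz); rewrite /= !inE !negb_or => ?; split_conjunctions.
rewrite !orient_encode //; try solve_distinct.
do 5 (apply/implyP => /eqP ?); apply/eqP.
apply: (chiT (W s) (W t) (W x) (W y) (W z)) => //.
by rewrite (uniq_map_nth (s := [:: s; t; x; y; z])) //= sn tn xn yn zn.
Qed.

Lemma encode_interiority : interiorityb o n ->
  forall t x y z, {subset [:: t; x; y; z] <= w} -> uniq [:: t; x; y; z] ->
  chi t y z = 1%R -> chi x t z = 1%R -> chi x y t = 1%R -> chi x y z = 1%R.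
Proof.
move=> oI t x y z sw txyz h1 h2 h3.
have idx a : a \in w -> index a w < n by rewrite -w_size index_mem.
have [tw xw yw zw] : [/\ t \in w, x \in w, y \in w & z \in w] by rewrite !sw ?inE ?eqxx ?orbT.
move: oI => /all_iotaP/(_ _ (idx _ tw))/all_iotaP/(_ _ (idx _ xw)).
move=> /all_iotaP/(_ _ (idx _ yw))/all_iotaP/(_ _ (idx _ zw)).
rewrite -[[:: index t w; _; _; _]]/(map (index^~ w) [:: t; x; y; z]) uniq_map_index // txyz.
move: (txyz); rewrite /= !inE !negb_or => ?; split_conjunctions.
rewrite !orient_encode_index //; try solve_distinct.
by rewrite h1 h2 h3 eqxx => /eqP.
Qed.

Lemma encode_transitivity : transitivityb o n ->
  forall s t x y z, {subset [:: s; t; x; y; z] <= w} -> uniq [:: s; t; x; y; z] ->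
  chi t s x = 1%R -> chi t s y = 1%R -> chi t s z = 1%R ->
  chi x y t = 1%R -> chi y z t = 1%R -> chi x z t = 1%R.
Proof.
move=> oT s t x y z sw stxyz h1 h2 h3 h4 h5.
have idx a : a \in w -> index a w < n by rewrite -w_size index_mem.
have [sw' tw xw yw zw] : [/\ s \in w, t \in w, x \in w, y \in w & z \in w].
  by rewrite !sw ?inE ?eqxx ?orbT.
move: oT => /all_iotaP/(_ _ (idx _ sw'))/all_iotaP/(_ _ (idx _ tw)).
move=> /all_iotaP/(_ _ (idx _ xw))/all_iotaP/(_ _ (idx _ yw))/all_iotaP/(_ _ (idx _ zw)).
rewrite -[[:: index s w; _; _; _; _]]/(map (index^~ w) [:: s; t; x; y; z]).
rewrite uniq_map_index // stxyz.
move: (stxyz); rewrite /= !inE !negb_or => ?; split_conjunctions.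
rewrite !orient_encode_index //; try solve_distinct.
by rewrite h1 h2 h3 h4 h5 eqxx => /eqP.
Qed.

Lemma monotoneb_encode p q r s : p < q -> q < r -> r < s -> s < n ->
  monotoneb o p q r s =
  one_sign_change (chi (W q) (W r) (W s) == 1%R) (chi (W p) (W r) (W s) == 1%R)
                  (chi (W p) (W q) (W s) == 1%R) (chi (W p) (W q) (W r) == 1%R).
Proof.
move=> pq qr rs sn; rewrite /monotoneb !orient_encode // ?distinct3E.
all: by try apply/and3P; try split; lia.
Qed.

Lemma check_chirotope_configuration H C : chirotope chi ->
  all_chirotope_configurations n H C -> H o -> C o.
Proof.
case=> _ chiI chiT /check_configuration; cbv beta => check Ho.
by move: check; rewrite Ho interiorityb_encode ?transitivityb_encode.
Qed.

End Encoding.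

(** * Signotopes are chirotopes *)

Section Signotope.
Variables (T : finType) (chi : T -> T -> T -> int) (lt : rel T).
Hypotheses (chiS : sign_function chi) (lt_trans : transitive lt)
  (lt_total : forall x y, x != y -> lt x y || lt y x) (chi_sig : signotope lt chi).

Let le x y := (x == y) || lt x y.

Let le_total : total le.
Proof.
by move=> x y; rewrite /le; case: (eqVneq x y) => [->|/lt_total/orP[] ->]; rewrite ?eqxx ?orbT.
Qed.

Let le_trans : transitive le.
Proof.
move=> y x z; rewrite /le => /orP[/eqP -> // | xy] /orP[/eqP <- | yz]; first by rewrite xy orbT.
by rewrite (lt_trans xy yz) orbT.
Qed.

Lemma pairwise_lt_sort (s : seq T) : uniq s -> pairwise lt (sort le s).
Proof.
rewrite -(sort_uniq le) uniq_pairwise => s_neq.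
have s_le : pairwise le (sort le s) by rewrite -sorted_pairwise // sort_sorted.
apply: (sub_pairwise (r := [rel x y | le x y && (x != y)])); last by rewrite pairwise_relI s_le.
by move=> x y /andP [/orP [/eqP ->|//]]; rewrite eqxx.
Qed.

Lemma monotoneb_sort (x0 : T) (s : seq T) : uniq s ->
  forall p q r t, p < q -> q < r -> r < t -> t < size s ->
  monotoneb (orient (encode chi x0 (sort le s)) (size s)) p q r t.
Proof.
move=> s_uniq p q r t pq qr rt ts.
have w_size : size (sort le s) = size s by rewrite size_sort.
rewrite monotoneb_encode //; last by rewrite (sort_uniq le).
have /pairwiseP w_lt := pairwise_lt_sort s_uniq.
by apply: chi_sig; apply: w_lt; rewrite ?inE ?w_size //; lia.
Qed.

Lemma signotope_interiority : interiority chi.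
Proof.
move=> t x y z txyz h1 h2 h3; pose w := sort le [:: t; x; y; z].
have w_uniq : uniq w by rewrite sort_uniq.
have w_size : size w = 4 by rewrite size_sort.
have := check_configuration chi t w_size signotope4_interiority_check.
cbv beta; rewrite monotoneb_sort // => oI.
by apply: (encode_interiority chiS w_uniq w_size oI _ txyz) => // a; rewrite mem_sort.
Qed.

Lemma signotope_transitivity : transitivity chi.
Proof.
move=> s t x y z stxyz h1 h2 h3 h4 h5; pose w := sort le [:: s; t; x; y; z].
have w_uniq : uniq w by rewrite sort_uniq.
have w_size : size w = 5 by rewrite size_sort.
have := check_configuration chi t w_size signotope5_transitivity_check.
cbv beta; rewrite !monotoneb_sort // => oT.
by apply: (encode_transitivity chiS w_uniq w_size oT _ stxyz) => // a; rewrite mem_sort.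
Qed.

Lemma signotope_chirotope : chirotope chi.
Proof. by split; [exact: chiS | exact: signotope_interiority | exact: signotope_transitivity]. Qed.

End Signotope.

(** * The angular order around a rooted element *)

Definition angular_lt (T : finType) (chi : T -> T -> T -> int) (u : T) : rel T :=
  fun a b => (b != u) && ((a == u) || (a != b) && (chi a b u == 1%R)).

Section AngularOrder.
Variables (T : finType) (chi : T -> T -> T -> int) (u : T).
Hypothesis chiC : chirotope chi.
Let chiS : sign_function chi. Proof. by case: chiC. Qed.
Local Notation lt := (angular_lt chi u).

Lemma angular_lt_irr : irreflexive lt.
Proof. by move=> a; rewrite /angular_lt eqxx /= orbF andNb. Qed.

Lemma angular_lt_neq a b : lt a b -> a != b.
Proof. by apply: contraTneq => ->; rewrite angular_lt_irr. Qed.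

Lemma angular_ltNu a b : lt a b -> b != u.
Proof. by case/andP. Qed.

Lemma angular_lt_from_u b : lt u b = (b != u).
Proof. by rewrite /angular_lt eqxx andbT. Qed.

Lemma angular_ltE a b : a != u -> lt a b = [&& b != u, a != b & chi a b u == 1%R].
Proof. by move=> au; rewrite /angular_lt (negbTE au). Qed.

Lemma angular_lt_sign a b : a != u -> b != u -> a != b -> lt a b = (chi a b u == 1%R).
Proof. by move=> au bu ab; rewrite angular_ltE // bu ab. Qed.

Lemma angular_lt_chi_u a b : a != u -> lt a b -> chi u a b = 1%R.
Proof.
move=> au; rewrite angular_ltE // => /and3P [bu ab /eqP <-].
by apply: (sign_rot chiS); solve_distinct.
Qed.

Lemma angular_lt_total a b : a != b -> lt a b || lt b a.
Proof.
move=> ab; case: (eqVneq a u) ab => [->|au] ab; first by rewrite angular_lt_from_u eq_sym ab.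
case: (eqVneq b u) => [->|bu]; first by rewrite angular_lt_from_u au orbT.
rewrite !angular_ltE // (eq_sym b a) ab au bu /= (sign_eq1_swap chiS); last by solve_distinct.
by case: (chi b a u == 1%R).
Qed.

Lemma angular_lt_asym a b : lt a b -> ~~ lt b a.
Proof.
move=> ab; have bu := angular_ltNu ab.
case: (eqVneq a u) ab => [->|au] ab; first by rewrite /angular_lt eqxx.
move: ab; rewrite !angular_ltE // => /and3P [_ ab /eqP abu].
by rewrite au (eq_sym b a) ab (sign_eq1_swap chiS (x := b)) ?abu //; solve_distinct.
Qed.

Lemma angular_lt_chain a b c : a != u -> lt a b -> lt b c ->
  [/\ uniq [:: u; a; b; c], chi a b u = 1%R & chi b c u = 1%R].
Proof.
move=> au ab bc; have bu := angular_ltNu ab; have cu := angular_ltNu bc.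
have ac : a != c by apply: contraTneq bc => <-; exact: angular_lt_asym.
move: ab bc; rewrite !angular_ltE // => /and3P [_ ab /eqP abu] /and3P [_ bc /eqP bcu].
by split => //; solve_distinct.
Qed.

Lemma angular_lt_trans_succ p : is_succ chi u p -> transitive lt.
Proof.
case=> pu chi_up b a c ab bc.
case: (eqVneq a u) => [->|au]; first by rewrite angular_lt_from_u (angular_ltNu bc).
have [uabc abu bcu] := angular_lt_chain au ab bc.
have bu := angular_ltNu ab; have cu := angular_ltNu bc.
move: (uabc); rewrite /= !inE !negb_or => ?; split_conjunctions.
have p_min z : z != u -> z != p -> lt p z.
  move=> zu zp; rewrite angular_ltE // zu eq_sym zp -(sign_rot chiS (x := u)) ?chi_up //.
  solve_distinct.
case: (eqVneq a p) => [eap|ap]; first by subst a; apply: p_min; rewrite // eq_sym.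
case: (eqVneq b p) => [ebp|bp]; first by subst b; move: (angular_lt_asym ab); rewrite p_min.
case: (eqVneq c p) => [ecp|cp]; first by subst c; move: (angular_lt_asym bc); rewrite p_min.
case: chiC => _ _ chiT; rewrite angular_ltE //; apply/and3P; split => //.
by apply/eqP; apply: (chiT p u a b c); rewrite ?chi_up //; solve_distinct.
Qed.

Lemma angular_lt_trans_pred m : is_pred chi u m -> transitive lt.
Proof.
case=> mu chi_mu b a c ab bc.
case: (eqVneq a u) => [->|au]; first by rewrite angular_lt_from_u (angular_ltNu bc).
have [uabc abu bcu] := angular_lt_chain au ab bc.
have bu := angular_ltNu ab; have cu := angular_ltNu bc.
move: (uabc); rewrite /= !inE !negb_or => ?; split_conjunctions.
have m_max z : z != u -> z != m -> lt z m.
  move=> zu zm; rewrite angular_ltE // mu zm (sign_rot chiS (x := z)) ?chi_mu ?eqxx //.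
  solve_distinct.
case: (eqVneq c m) => [ecm|cm]; first by subst c; apply: m_max.
case: (eqVneq a m) => [eam|am].
  by subst a; move: (angular_lt_asym ab); rewrite m_max // eq_sym.
case: (eqVneq b m) => [ebm|bm].
  by subst b; move: (angular_lt_asym bc); rewrite m_max // eq_sym.
have w_uniq : uniq [:: u; m; a; b; c] by solve_distinct.
have := check_chirotope_configuration (x0 := u) chiS w_uniq (erefl _) chiC
  mirrored_transitivity_check.
cbv beta; rewrite !orient_encode //= !chi_mu // abu bcu eqxx => /(_ isT) /eqP acu.
by rewrite angular_ltE //; apply/and3P; split => //; apply/eqP.
Qed.

Lemma angular_signotope : transitive lt -> signotope lt chi.
Proof.
move=> lt_trans p q r s pq qr rs.
have pr := lt_trans _ _ _ pq qr; have qs := lt_trans _ _ _ qr rs.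
have ps := lt_trans _ _ _ pr rs.
have qu := angular_ltNu pq; have ru := angular_ltNu qr; have su := angular_ltNu rs.
case: (eqVneq p u) pq pr ps => [->|pu] pq pr ps.
  by rewrite !angular_lt_chi_u // eqxx; case: (_ == _).
have w_uniq : uniq [:: u; p; q; r; s].
  move: (angular_lt_neq pq) (angular_lt_neq pr) (angular_lt_neq ps).
  by move: (angular_lt_neq qr) (angular_lt_neq qs) (angular_lt_neq rs) => *; solve_distinct.
have := check_chirotope_configuration (x0 := u) chiS w_uniq (erefl _) chiC
  angular_signotope_check.
by cbv beta; rewrite !orient_encode //= !angular_lt_chi_u // eqxx monotoneb_encode //=; apply.
Qed.

End AngularOrder.

Section StrictTotalOrder.
Variables (T : finType) (lt : rel T).
Hypotheses (lt_irr : irreflexive lt) (lt_trans : transitive lt)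
  (lt_total : forall x y, x != y -> lt x y || lt y x).

Lemma lt_asym x y : lt x y -> ~~ lt y x.
Proof. by move=> xy; apply/negP => /(lt_trans xy); rewrite lt_irr. Qed.

Lemma lt_flip x y : x != y -> lt y x = ~~ lt x y.
Proof.
case/lt_total/orP => [xy|yx]; first by rewrite xy (negbTE (lt_asym xy)).
by rewrite yx lt_asym.
Qed.

Definition cyclic_sign (x y z : T) : int :=
  if [|| lt x y && lt y z, lt y z && lt z x | lt z x && lt x y] then 1%R else (-1)%R.

Lemma cyclic_sign_sign_function : sign_function cyclic_sign.
Proof.
move=> x y z; rewrite distinct3E => /and3P [xy xz yz].
rewrite /cyclic_sign (lt_flip xy) (lt_flip yz) (lt_flip xz) ?(eq_sym z x).
case: (lt x y); case: (lt y z); case: (lt x z) => /=.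
all: by rewrite ?opprK; do !split; try by [left | right].
Qed.

Lemma exists_lt_max (P : pred T) x0 : P x0 ->
  exists2 y, P y & forall z, P z -> z != y -> lt z y.
Proof.
move=> Px0; pose below z := #|[pred j | lt j z]|.
have [y Py y_max] := arg_maxnP below Px0.
exists y => // z Pz zy; case/orP: (lt_total zy) => // yz.
have : below z <= below y := y_max z Pz.
rewrite leqNgt => /negP; case.
apply: proper_card; apply/properP; split.
  by apply/subsetP => j; rewrite !inE => /lt_trans; apply.
by exists y; rewrite !inE ?yz ?lt_irr.
Qed.

End StrictTotalOrder.

Definition sign_function_at (T : finType) (chi : T -> T -> T -> int) (x y z : T) :=
  (chi x y z = 1%R \/ chi x y z = (-1)%R) /\
  chi x y z = chi y z x /\ chi x y z = chi z x y /\
  chi x y z = (- chi z y x)%R /\ chi x y z = (- chi y x z)%R /\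
  chi x y z = (- chi x z y)%R.

Lemma sign_function_at_transfer (T : finType) (Q : T -> T -> T -> bool)
    (chi c : T -> T -> T -> int) x y z :
  (forall a b d, Q a b d -> Q b d a /\ Q b a d) ->
  (forall a b d, Q a b d -> distinct3 a b d -> chi a b d = c a b d) ->
  Q x y z -> distinct3 x y z -> sign_function_at c x y z -> sign_function_at chi x y z.
Proof.
move=> Qperm chi_c Qxyz xyz.
have [Q1 Q2] := Qperm _ _ _ Qxyz; have [Q3 Q4] := Qperm _ _ _ Q1.
have [_ Q5] := Qperm _ _ _ Q3; have [_ Q6] := Qperm _ _ _ Q2.
move: (xyz); rewrite distinct3E => /and3P [? ? ?].
by rewrite /sign_function_at !chi_c //; solve_distinct.
Qed.

(** * The join *)

Section Join.
Variables (T1 T2 : finType) (chi1 : T1 -> T1 -> T1 -> int) (u1 u1m : T1)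
          (chi2 : T2 -> T2 -> T2 -> int) (u2 u2p : T2).
Hypotheses (chi1C : chirotope chi1) (chi2C : chirotope chi2)
  (u1m_pred : is_pred chi1 u1 u1m) (u2p_succ : is_succ chi2 u2 u2p).
Let chi1S : sign_function chi1. Proof. by case: chi1C. Qed.
Let chi2S : sign_function chi2. Proof. by case: chi2C. Qed.

Local Notation X3 := (join_type u1 u2 u2p).
Local Notation chi3 := (join_chi chi1 u1 u1m chi2 u2 u2p).

(* The left part is X1 + u3 and the right part is (X2 \ u2^+) + x0 + u3; [left_val] and
   [right_val] read them in T1 and T2, with u3 read as u1 and u2 (junk elsewhere). *)
Definition in_left (x : X3) := if x is Some (inr _) then false else true.
Definition in_right (x : X3) := if x is Some (inl a) then val a == u1m else true.

Definition left_val (x : X3) : T1 := if x is Some (inl a) then val a else u1.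
Definition right_val (x : X3) : T2 :=
  match x with
  | Some (inl a) => if val a == u1m then u2p else u2
  | Some (inr b) => val b
  | None => u2
  end.

Definition join_lt (x y : X3) : bool :=
  match x, y with
  | None, Some _ => true
  | Some (inl a), Some (inl b) => angular_lt chi1 u1 (val a) (val b)
  | Some (inl _), Some (inr _) => true
  | Some (inr a), Some (inr b) => angular_lt chi2 u2 (val a) (val b)
  | _, _ => false
  end.

Definition mixed (x y z : X3) :=
  ~~ [&& in_left x, in_left y & in_left z] && ~~ [&& in_right x, in_right y & in_right z].

Lemma eq_inl (a c : {x : T1 | x != u1}) :
  (Some (inl a) == Some (inl c) :> X3) = (val a == val c).
Proof. by apply/eqP/eqP => [[->] | /val_inj ->]. Qed.

Lemma eq_inr (a c : {y : T2 | (y != u2) && (y != u2p)}) :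
  (Some (inr a) == Some (inr c) :> X3) = (val a == val c).
Proof. by apply/eqP/eqP => [[->] | /val_inj ->]. Qed.

Ltac distinct_simpl := rewrite /distinct3 /= ?inE ?negb_or ?andbT ?eq_inl ?eq_inr /=.

Ltac rotation_closes chiS :=
  first [ reflexivity | apply: (sign_rot chiS); solve_distinct
        | symmetry; apply: (sign_rot chiS); solve_distinct ].

Lemma join_chi_left x y z : in_left x -> in_left y -> in_left z -> distinct3 x y z ->
  chi3 x y z = chi1 (left_val x) (left_val y) (left_val z).
Proof.
case: x => [[[a ha]|[b hb]]|] //; case: y => [[[c hc]|[d hd]]|] //;
  case: z => [[[e he]|[g hg]]|] // _ _ _; distinct_simpl => xyz; split_conjunctions.
all: rewrite /join_chi /join_rule /=.
all: rotation_closes chi1S.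
Qed.

Ltac subst_u1m :=
  repeat match goal with H : is_true (?a == u1m) |- _ => move/eqP: H => H; subst a end.

Lemma join_chi_right x y z : in_right x -> in_right y -> in_right z -> distinct3 x y z ->
  chi3 x y z = chi2 (right_val x) (right_val y) (right_val z).
Proof.
have u2pu2 := u2p_succ.1.
case: x => [[[a ha]|[b hb]]|]; case: y => [[[c hc]|[d hd]]|];
  case: z => [[[e he]|[g hg]]|] => /= xr yr zr; subst_u1m;
  distinct_simpl; rewrite ?eqxx //= => xyz; split_conjunctions.
all: rewrite /join_chi /join_rule /= ?eqxx /=.
all: try case/andP: (hb) => ? ?; try case/andP: (hd) => ? ?; try case/andP: (hg) => ? ?.
all: rotation_closes chi2S.
Qed.

Lemma chi1_u1m_neg a : a != u1 -> a != u1m -> chi1 u1m a u1 = (-1)%R.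
Proof.
case: u1m_pred => u1mu1 chi_u1m au1 au1m.
by rewrite (sign_swap23 chi1S) ?chi_u1m //; solve_distinct.
Qed.

Lemma chi2_u2p_neg b : b != u2 -> b != u2p -> chi2 u2 b u2p = (-1)%R.
Proof.
case: u2p_succ => u2pu2 chi_u2p bu2 bu2p.
by rewrite (sign_swap23 chi2S) ?chi_u2p //; solve_distinct.
Qed.

Lemma angular_lt_u1m_max c : angular_lt chi1 u1 u1m c = false.
Proof.
have u1mu1 := u1m_pred.1.
case: (eqVneq c u1) => [->|cu1]; first by apply/negP => /angular_ltNu; rewrite eqxx.
case: (eqVneq c u1m) => [->|cu1m]; first by rewrite angular_lt_irr.
rewrite angular_lt_sign //; last by rewrite eq_sym.
by rewrite chi1_u1m_neg.
Qed.

Lemma join_chi_mixed x y z : mixed x y z -> distinct3 x y z ->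
  chi3 x y z = cyclic_sign join_lt x y z.
Proof.
have u1mu1 := u1m_pred.1; have u2pu2 := u2p_succ.1.
rewrite /mixed; case: x => [[[a ha]|[b hb]]|]; case: y => [[[c hc]|[d hd]]|];
  case: z => [[[e he]|[g hg]]|] => //=.
all: try case: (eqVneq a u1m) => [?|na]; try case: (eqVneq c u1m) => [?|nc];
  try case: (eqVneq e u1m) => [?|ne].
all: subst; rewrite ?eqxx ?(negbTE na) ?(negbTE nc) ?(negbTE ne) //= => _.
all: distinct_simpl; rewrite ?eqxx //= => xyz; split_conjunctions.
all: rewrite /join_chi /join_rule /cyclic_sign /= ?eqxx.
all: rewrite ?(negbTE na) ?(negbTE nc) ?(negbTE ne) /=.
all: try case/andP: (hb) => ? ?; try case/andP: (hd) => ? ?; try case/andP: (hg) => ? ?.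
all: try by [].
all: rewrite ?chi1_u1m_neg ?chi2_u2p_neg //.
all: rewrite ?(sign_rot chi2S (x := u2)); try solve_distinct.
all: rewrite angular_lt_sign; try solve_distinct.
all: rewrite /= ?andbT ?orbF ?andbF ?orbF ?orFb ?chi1_u1m_neg ?chi2_u2p_neg //.
all: first [ apply/esym/(sign_eq1E chi1S); solve_distinct
           | apply/esym/(sign_eq1E chi2S); solve_distinct ].
Qed.

Let chi1_lt_trans : transitive (angular_lt chi1 u1) := angular_lt_trans_pred chi1C u1m_pred.
Let chi2_lt_trans : transitive (angular_lt chi2 u2) := angular_lt_trans_succ chi2C u2p_succ.

Lemma join_lt_irr : irreflexive join_lt.
Proof. by case=> [[a|b]|] //=; apply: angular_lt_irr. Qed.

Lemma join_lt_trans : transitive join_lt.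
Proof.
move=> y x z; case: x => [[a|b]|]; case: y => [[c|d]|]; case: z => [[e|g]|] //=.
- exact: chi1_lt_trans.
- exact: chi2_lt_trans.
Qed.

Lemma join_lt_total x y : x != y -> join_lt x y || join_lt y x.
Proof.
case: x => [[a|b]|]; case: y => [[c|d]|] //=; rewrite ?eq_inl ?eq_inr.
all: exact: angular_lt_total.
Qed.

Lemma join_lt_left x y : in_left x -> in_left y -> join_lt x y ->
  angular_lt chi1 u1 (left_val x) (left_val y).
Proof.
by case: x => [[a|b]|]; case: y => [[c|d]|] //= _ _ _; rewrite angular_lt_from_u (valP c).
Qed.

Lemma join_lt_right x y : in_right x -> in_right y -> join_lt x y ->
  angular_lt chi2 u2 (right_val x) (right_val y).
Proof.
have [u2pu2 chi_u2p] := u2p_succ.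
case: x => [[a|b]|]; case: y => [[c|d]|] //=.
- by move=> /eqP -> /eqP ->; rewrite angular_lt_irr.
- move=> /eqP -> _ _; rewrite eqxx; case/andP: (valP d) => du2 du2p.
  rewrite angular_lt_sign //; last by rewrite eq_sym.
  by rewrite -(sign_rot chi2S (x := u2)) ?chi_u2p //; solve_distinct.
- by move=> _ /eqP ->; rewrite eqxx angular_lt_from_u.
- by move=> _ _; rewrite angular_lt_from_u; case/andP: (valP d).
Qed.

Lemma left_val_inj : {in in_left &, injective left_val}.
Proof.
move=> x y; case: x => [[a|b]|]; case: y => [[c|d]|] //= _ _.
- by move/val_inj => ->.
- by move=> e; move: (valP a); rewrite /= e eqxx.
- by move=> e; move: (valP c); rewrite /= -e eqxx.
Qed.

Lemma right_val_inj : {in in_right &, injective right_val}.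
Proof.
have u2pu2 := u2p_succ.1.
move=> x y; case: x => [[a|b]|]; case: y => [[c|d]|] //=.
- by move=> /eqP ea /eqP ec _; congr (Some (inl _)); apply: val_inj; rewrite /= ea ec.
all: try case/andP: (valP b) => b1 b2; try case/andP: (valP d) => d1 d2.
all: try (move=> /eqP ->; rewrite eqxx); try (move=> _ /eqP ->; rewrite eqxx).
- by move=> _ /eqP e; rewrite eq_sym e in d2.
- by move=> _ /eqP e; rewrite e in u2pu2.
- by move=> /eqP e; rewrite e in b2.
- by move=> _ _ e; congr (Some (inr _)); apply: val_inj.
- by move=> _ _ /eqP e; rewrite e in b1.
- by move=> /eqP e; rewrite eq_sym e in u2pu2.
- by move=> _ _ /eqP e; rewrite eq_sym e in d1.
Qed.

Lemma join_sign_function : sign_function chi3.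
Proof.
move=> x y z xyz.
have perm_closed (P : pred X3) a b d :
    [&& P a, P b & P d] -> [&& P b, P d & P a] /\ [&& P b, P a & P d].
  by case: (P a); case: (P b); case: (P d).
have distinct3_val (T : finType) (P : pred X3) (f : X3 -> T) : {in P &, injective f} ->
    [&& P x, P y & P z] -> distinct3 (f x) (f y) (f z).
  move=> f_inj /and3P [Px Py Pz]; move: xyz; rewrite !distinct3E.
  by case/and3P => xy xz yz; rewrite !(inj_in_eq f_inj) ?xy ?xz ?yz.
case: (boolP [&& in_left x, in_left y & in_left z]) => [xyz_left | not_left].
  apply: (sign_function_at_transfer (Q := fun a b d => [&& in_left a, in_left b & in_left d])
    (c := fun a b d => chi1 (left_val a) (left_val b) (left_val d))) => //.
  - exact: perm_closed.
  - by move=> a b d /and3P [? ? ?]; apply: join_chi_left.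
  - exact/chi1S/distinct3_val/xyz_left/left_val_inj.
case: (boolP [&& in_right x, in_right y & in_right z]) => [xyz_right | not_right].
  apply: (sign_function_at_transfer (Q := fun a b d => [&& in_right a, in_right b & in_right d])
    (c := fun a b d => chi2 (right_val a) (right_val b) (right_val d))) => //.
  - exact: perm_closed.
  - by move=> a b d /and3P [? ? ?]; apply: join_chi_right.
  - exact/chi2S/distinct3_val/xyz_right/right_val_inj.
apply: (sign_function_at_transfer (Q := mixed) (c := cyclic_sign join_lt)) => //.
- move=> a b d; rewrite /mixed.
  by case: (in_left a); case: (in_left b); case: (in_left d);
     case: (in_right a); case: (in_right b); case: (in_right d).
- exact: join_chi_mixed.
- by rewrite /mixed not_left not_right.
- exact: (cyclic_sign_sign_function join_lt_irr join_lt_trans join_lt_total).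
Qed.

Lemma join_lt_neq x y : join_lt x y -> x != y.
Proof. by apply: contraTneq => ->; rewrite join_lt_irr. Qed.

Lemma join_lt_distinct3 x y z : join_lt x y -> join_lt y z -> distinct3 x y z.
Proof.
move=> xy yz; rewrite distinct3E (join_lt_neq xy) (join_lt_neq yz).
by rewrite (join_lt_neq (join_lt_trans xy yz)).
Qed.

Lemma join_ltNu3 x y : join_lt x y -> y != None.
Proof. by case: x => [[a|b]|]; case: y => [[c|d]|]. Qed.

Lemma join_lt_in_left x y : join_lt x y -> in_left y -> in_left x.
Proof. by case: x => [[a|b]|]; case: y => [[c|d]|]. Qed.

Lemma join_lt_in_right x y : join_lt x y -> x != None -> in_right x -> in_right y.
Proof.
case: x => [[a|b]|]; case: y => [[c|d]|] //= xy _ /eqP ax0.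
by move: xy; rewrite ax0 angular_lt_u1m_max.
Qed.

Lemma join_lt_from_x0 x y : join_lt x y -> x != None -> in_left x -> in_right x -> ~~ in_left y.
Proof.
case: x => [[a|b]|]; case: y => [[c|d]|] //= xy _ _ /eqP ax0.
by move: xy; rewrite ax0 angular_lt_u1m_max.
Qed.

Lemma join_chi_increasing_mixed x y z : join_lt x y -> join_lt y z -> mixed x y z ->
  chi3 x y z = 1%R.
Proof.
move=> xy yz xyz; rewrite join_chi_mixed ?join_lt_distinct3 //.
by rewrite /cyclic_sign xy yz.
Qed.

Lemma join_chi_u3 y z : y != None -> join_lt y z -> chi3 None y z = 1%R.
Proof.
move=> yu3 yz; have u3y : join_lt None y by case: y yu3 yz.
have u3yz := join_lt_distinct3 u3y yz.
case: (boolP (in_left y && in_left z)) => [/andP [yl zl] | not_left].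
  rewrite join_chi_left //; apply: (angular_lt_chi_u chi1C) (join_lt_left _ _ yz) => //.
  by case: y yu3 yl {yz u3y u3yz} => [[a|b]|] //= _ _; apply: (valP a).
case: (boolP (in_right y && in_right z)) => [/andP [yr zr] | not_right].
  rewrite join_chi_right //; apply: (angular_lt_chi_u chi2C) (join_lt_right _ _ yz) => //.
  case: y yu3 yr {yz u3y u3yz not_left} => [[a|b]|] //= _; last by case/andP: (valP b).
  by move=> /eqP ->; rewrite eqxx u2p_succ.1.
by rewrite join_chi_increasing_mixed // /mixed /= not_left not_right.
Qed.

Lemma join_signotope : signotope join_lt chi3.
Proof.
move=> p q r s pq qr rs.
have pr := join_lt_trans pq qr; have qs := join_lt_trans qr rs.
have ps := join_lt_trans pr rs; have qu3 := join_ltNu3 pq.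
case: (boolP [&& in_left p, in_left q, in_left r & in_left s]) => [/and4P [? ? ? ?]|not_left].
  rewrite !join_chi_left ?join_lt_distinct3 //.
  by apply: (angular_signotope chi1C chi1_lt_trans); apply: join_lt_left.
case: (boolP [&& in_right p, in_right q, in_right r & in_right s]) => [/and4P [? ? ? ?]|not_right].
  rewrite !join_chi_right ?join_lt_distinct3 //.
  by apply: (angular_signotope chi2C chi2_lt_trans); apply: join_lt_right.
have s_not_left : ~~ in_left s.
  apply: contra not_left => ls; have lr := join_lt_in_left rs ls.
  have lq := join_lt_in_left qr lr; by rewrite (join_lt_in_left pq lq) lq lr ls.
have p_not_right : p != None -> ~~ in_right p.
  move=> pu3; apply: contra not_right => rp; have rq := join_lt_in_right pq pu3 rp.
  have rr := join_lt_in_right qr qu3 rq.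
  by rewrite rp rq rr (join_lt_in_right rs (join_ltNu3 qr) rr).
have chi_p a b : join_lt p a -> join_lt a b -> ~~ in_left b -> chi3 p a b = 1%R.
  move=> pa ab lb; case: (eqVneq p None) pa => [-> | pu3] pa.
    by apply: join_chi_u3 => //; exact: join_ltNu3 pa.
  apply: join_chi_increasing_mixed => //.
  by rewrite /mixed (negbTE lb) (negbTE (p_not_right pu3)) !andbF.
have [qrs | pqr] : chi3 q r s = 1%R \/ chi3 p q r = 1%R.
  case: (boolP [&& in_right q, in_right r & in_right s]) => [/and3P [rq rr _]|not_right_qrs].
    right; apply: chi_p => //; apply/negP => lr.
    by move: (join_lt_from_x0 qr qu3 (join_lt_in_left qr lr) rq); rewrite lr.
  left; apply: join_chi_increasing_mixed => //.
  by rewrite /mixed (negbTE s_not_left) !andbF not_right_qrs.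
all: rewrite (chi_p r s) // (chi_p q s) // ?qrs ?pqr eqxx /one_sign_change /=.
all: by case: (_ == _).
Qed.

Lemma join_extreme : extreme chi3 None.
Proof.
have u1mu1 := u1m_pred.1.
have [y /= yu3 y_max] := exists_lt_max join_lt_irr join_lt_trans join_lt_total
  (P := fun x : X3 => x != None) (x0 := Some (inl (exist _ u1m u1mu1))) isT.
exists y; split => //; exists (-1)%R => z zu3 zy.
rewrite (sign_swap23 join_sign_function) ?join_chi_u3 ?y_max //.
solve_distinct.
Qed.

Lemma join_rooted_chirotope : rooted_chirotope chi3 None.
Proof.
split; last exact: join_extreme.
exact: (signotope_chirotope join_sign_function join_lt_trans join_lt_total join_signotope).
Qed.

End Join.

Unset Implicit Arguments.

Theorem corollary2p3 (T1 T2 : finType)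
  (chi1 : T1 -> T1 -> T1 -> int) (u1 u1m : T1)
  (chi2 : T2 -> T2 -> T2 -> int) (u2 u2p : T2) :
  rooted_chirotope chi1 u1 -> rooted_chirotope chi2 u2 ->
  is_pred chi1 u1 u1m -> is_succ chi2 u2 u2p ->
  rooted_chirotope (join_chi chi1 u1 u1m chi2 u2 u2p)
                   (None : join_type u1 u2 u2p).
Proof.
move=> [chi1C _] [chi2C _] u1m_pred u2p_succ.
exact: join_rooted_chirotope.
Qed.
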